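(* Let $\Sigma$ be any set of $\mathscr{L}$-sentences. For every $\mathscr{L}$-formula $\phi$ and every assignment $s$ into $\mathbb{N}$, $\mathcal{M}_\Sigma\models\phi[s]$ if and only if $\mathcal{M}_\Sigma\models\phi^s$.
   Context: $\mathscr{L}$ is the language of Peano arithmetic (variables, constant $0$, unary $S$, binary $+$, $\cdot$) extended by a unary modal operator $K$: whenever $\phi$ is a formula, $K\phi$ is a formula (called purely modal). An $\mathscr{L}$-structure consists of a first-order structure for the arithmetic part together with a truth value for each purely modal formula $K\phi$ and each assignment $s$ of the variables (satisfying the standard constraints: independence from variables not free in $\phi$, invariance under alphabetic variants, and weak substitution of variables for variables); satisfaction $\mathcal{M}\models\phi[s]$ is extended inductively to all formulas, and $\mathcal{M}\models\phi$ means $\mathcal{M}\models\phi[s]$ for all assignments $s$. For a set $\Sigma$ of sentences, $\Sigma\models\phi$ means every $\mathscr{L}$-structure satisfying all members of $\Sigma$ satisfies $\phi$. For a formula $\phi$ and an assignment $s$ into $\mathbb{N}$, $\phi^s$ is the sentence obtained by replacing each free variable $x$ of $\phi$ by the numeral $\overline{s(x)}$. $\mathcal{M}_\Sigma$ is the $\mathscr{L}$-structure with universe $\mathbb{N}$, arithmetic symbols interpreted as usual, and $\mathcal{M}_\Sigma\models K\phi[s]$ iff $\Sigma\models\phi^s$ (for all formulas $\phi$ and assignments $s$ into $\mathbb{N}$). *)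

From Stdlib Require Import Arith.

Inductive term : Type :=
| Var : nat -> term
| Zero : term
| Succ : term -> term
| Plus : term -> term -> term
| Mult : term -> term -> term.

Inductive form : Type :=
| Eq : term -> term -> form
| Neg : form -> form
| Imp : form -> form -> form
| Forall : nat -> form -> form
| K : form -> form.

Fixpoint tfree (t : term) (x : nat) : Prop :=
  match t with
  | Var y => y = x
  | Zero => False
  | Succ t1 => tfree t1 x
  | Plus t1 t2 | Mult t1 t2 => tfree t1 x \/ tfree t2 x
  end.

Fixpoint free (phi : form) (x : nat) : Prop :=
  match phi with
  | Eq t u => tfree t x \/ tfree u x
  | Neg p => free p x
  | Imp p q => free p x \/ free q x
  | Forall y p => y <> x /\ free p x
  | K p => free p x
  end.

Definition sentence (phi : form) : Prop := forall x, ~ free phi x.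

Definition upd {A : Type} (f : nat -> A) (x : nat) (a : A) : nat -> A :=
  fun y => if Nat.eqb y x then a else f y.

(* simultaneous substitution of terms for free variables; bound variables
   are mapped to themselves.  Only used with closed terms (numerals),
   so no capture can occur. *)
Fixpoint tsubst (f : nat -> term) (t : term) : term :=
  match t with
  | Var y => f y
  | Zero => Zero
  | Succ t1 => Succ (tsubst f t1)
  | Plus t1 t2 => Plus (tsubst f t1) (tsubst f t2)
  | Mult t1 t2 => Mult (tsubst f t1) (tsubst f t2)
  end.

Fixpoint fsubst (f : nat -> term) (phi : form) : form :=
  match phi with
  | Eq t u => Eq (tsubst f t) (tsubst f u)
  | Neg p => Neg (fsubst f p)
  | Imp p q => Imp (fsubst f p) (fsubst f q)
  | Forall y p => Forall y (fsubst (upd f y (Var y)) p)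
  | K p => K (fsubst f p)
  end.

Fixpoint numeral (n : nat) : term :=
  match n with
  | O => Zero
  | S m => Succ (numeral m)
  end.

Definition inst (s : nat -> nat) (phi : form) : form :=
  fsubst (fun x => numeral (s x)) phi.

(* phi(y/x): replace the free occurrences of x by the variable y (plain,
   non-capture-avoiding replacement; used together with [substitutable]) *)
Definition subst_var (x y : nat) (phi : form) : form :=
  fsubst (upd Var x (Var y)) phi.

Fixpoint substitutable (y x : nat) (phi : form) : Prop :=
  match phi with
  | Eq _ _ => True
  | Neg p => substitutable y x p
  | Imp p q => substitutable y x p /\ substitutable y x q
  | Forall z p => ~ free (Forall z p) x \/ (z <> y /\ substitutable y x p)
  | K p => substitutable y x p
  end.

Inductive alpha : form -> form -> Prop :=
| alpha_rename : forall x y p,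
    ~ free p y -> substitutable y x p ->
    alpha (Forall x p) (Forall y (subst_var x y p))
| alpha_refl : forall p, alpha p p
| alpha_sym : forall p q, alpha p q -> alpha q p
| alpha_trans : forall p q r, alpha p q -> alpha q r -> alpha p r
| alpha_Neg : forall p q, alpha p q -> alpha (Neg p) (Neg q)
| alpha_Imp : forall p p' q q', alpha p p' -> alpha q q' -> alpha (Imp p q) (Imp p' q')
| alpha_Forall : forall x p q, alpha p q -> alpha (Forall x p) (Forall x q)
| alpha_K : forall p q, alpha p q -> alpha (K p) (K q).

Record structure : Type := {
  U : Type;
  zero : U;
  succ : U -> U;
  plus : U -> U -> U;
  mult : U -> U -> U;
  (* truth value of the purely modal formula K phi under assignment s *)
  kint : form -> (nat -> U) -> Prop
}.

Fixpoint teval (M : structure) (s : nat -> U M) (t : term) : U M :=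
  match t with
  | Var y => s y
  | Zero => zero M
  | Succ t1 => succ M (teval M s t1)
  | Plus t1 t2 => plus M (teval M s t1) (teval M s t2)
  | Mult t1 t2 => mult M (teval M s t1) (teval M s t2)
  end.

Fixpoint sat (M : structure) (s : nat -> U M) (phi : form) : Prop :=
  match phi with
  | Eq t u => teval M s t = teval M s u
  | Neg p => ~ sat M s p
  | Imp p q => sat M s p -> sat M s q
  | Forall x p => forall a : U M, sat M (upd s x a) p
  | K p => kint M p s
  end.

Definition valid_structure (M : structure) : Prop :=
  (forall phi (s s' : nat -> U M),
      (forall x, free phi x -> s x = s' x) -> (kint M phi s <-> kint M phi s'))
  /\
  (forall phi psi (s : nat -> U M), alpha phi psi -> (kint M phi s <-> kint M psi s))
  /\
  (forall phi x y (s : nat -> U M), substitutable y x phi ->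
      (kint M (subst_var x y phi) s <-> kint M phi (upd s x (s y)))).

Definition models (M : structure) (phi : form) : Prop :=
  forall s : nat -> U M, sat M s phi.

Definition entails (Sigma : form -> Prop) (phi : form) : Prop :=
  forall M : structure, valid_structure M ->
    (forall psi, Sigma psi -> models M psi) -> models M phi.

Definition M_Sigma (Sigma : form -> Prop) : structure := {|
  U := nat; zero := 0; succ := S; plus := Nat.add; mult := Nat.mul;
  kint := fun phi s => entails Sigma (inst s phi)
|}.

(* Substituting numerals for free variables and evaluating commute in the
   standard model: M_Sigma |= phi^f [s] iff M_Sigma |= phi [x |-> value of f x].
   The only non-routine case is K, where phi^f^s = phi^(s o f) because the
   numerals are closed.  Since phi^s is closed, its truth value does not depend
   on the assignment. *)
From Stdlib Require Import Arith FunctionalExtensionality.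

(* Substitutions that fix some variables and send the others to numerals;
   they stay in this class under [fsubst]'s binder update. *)
Definition numeral_subst (f : nat -> term) : Prop :=
  forall x, f x = Var x \/ exists n, f x = numeral n.

Lemma numeral_subst_upd f y : numeral_subst f -> numeral_subst (upd f y (Var y)).
Proof.
  intros Hf x. unfold upd. destruct (Nat.eqb_spec x y) as [-> | _]; auto.
Qed.

Lemma numeral_subst_inst (s : nat -> nat) : numeral_subst (fun x => numeral (s x)).
Proof. intro x. right. eauto. Qed.

Lemma tsubst_numeral g n : tsubst g (numeral n) = numeral n.
Proof. induction n; simpl; congruence. Qed.

Lemma tsubst_tsubst g f t : tsubst g (tsubst f t) = tsubst (fun x => tsubst g (f x)) t.
Proof. induction t; simpl; congruence. Qed.

Lemma tsubst_upd_numeral_subst g f y : numeral_subst f ->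
  (fun x => tsubst (upd g y (Var y)) (upd f y (Var y) x))
  = upd (fun x => tsubst g (f x)) y (Var y).
Proof.
  intro Hf. apply functional_extensionality; intro x. unfold upd.
  destruct (Nat.eqb_spec x y) as [-> | Hxy]; simpl.
  - now rewrite Nat.eqb_refl.
  - destruct (Hf x) as [-> | [n ->]]; simpl.
    + now destruct (Nat.eqb_spec x y).
    + now rewrite !tsubst_numeral.
Qed.

Lemma fsubst_fsubst p : forall g f, numeral_subst f ->
  fsubst g (fsubst f p) = fsubst (fun x => tsubst g (f x)) p.
Proof.
  induction p as [t u | p IHp | p IHp q IHq | y p IHp | p IHp]; intros g f Hf; simpl.
  - now rewrite !tsubst_tsubst.
  - now rewrite IHp.
  - now rewrite IHp, IHq.
  - rewrite IHp by now apply numeral_subst_upd.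
    now rewrite tsubst_upd_numeral_subst.
  - now rewrite IHp.
Qed.

Section StandardModel.
Variable Sigma : form -> Prop.
Notation M := (M_Sigma Sigma).

Lemma teval_numeral (s : nat -> nat) n : @teval M s (numeral n) = n.
Proof. induction n; simpl; auto. Qed.

Lemma teval_tsubst (s : nat -> nat) f t :
  @teval M s (tsubst f t) = @teval M (fun x => @teval M s (f x)) t.
Proof. induction t; simpl; congruence. Qed.

Lemma teval_upd_numeral_subst (s : nat -> nat) f y a : numeral_subst f ->
  (fun x => @teval M (upd s y a) (upd f y (Var y) x))
  = upd (fun x => @teval M s (f x)) y a.
Proof.
  intro Hf. apply functional_extensionality; intro x. unfold upd.
  destruct (Nat.eqb_spec x y) as [-> | Hxy]; simpl.
  - now rewrite Nat.eqb_refl.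
  - destruct (Hf x) as [-> | [n ->]]; simpl.
    + now destruct (Nat.eqb_spec x y).
    + now rewrite !teval_numeral.
Qed.

Lemma numeral_teval_numeral_subst (s : nat -> nat) f : numeral_subst f ->
  (fun x => tsubst (fun z => numeral (s z)) (f x))
  = (fun x => numeral (@teval M s (f x))).
Proof.
  intro Hf. apply functional_extensionality; intro x.
  destruct (Hf x) as [-> | [n ->]]; simpl; auto.
  now rewrite tsubst_numeral, teval_numeral.
Qed.

Lemma sat_fsubst p : forall f (s : nat -> nat), numeral_subst f ->
  (sat M s (fsubst f p) <-> sat M (fun x => @teval M s (f x)) p).
Proof.
  induction p as [t u | p IHp | p IHp q IHq | y p IHp | p IHp]; intros f s Hf; simpl.
  - now rewrite !teval_tsubst.
  - now rewrite IHp.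
  - now rewrite IHp, IHq.
  - pose proof (numeral_subst_upd f y Hf) as Hfy.
    split; intros H a; specialize (H a).
    + now rewrite IHp, teval_upd_numeral_subst in H.
    + now rewrite IHp, teval_upd_numeral_subst.
  - unfold inst. rewrite fsubst_fsubst by exact Hf.
    now rewrite numeral_teval_numeral_subst.
Qed.

Lemma sat_inst (s s' : nat -> nat) phi : sat M s' (inst s phi) <-> sat M s phi.
Proof.
  unfold inst. rewrite sat_fsubst by apply numeral_subst_inst.
  replace (fun x => @teval M s' (numeral (s x))) with s; [tauto |].
  apply functional_extensionality; intro x. now rewrite teval_numeral.
Qed.

End StandardModel.

Theorem lemma9 (Sigma : form -> Prop)
  (HSigma : forall psi, Sigma psi -> sentence psi)
  (phi : form) (s : nat -> nat) :
  sat (M_Sigma Sigma) s phi <-> models (M_Sigma Sigma) (inst s phi).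
Proof.
  split.
  - intros H s'. now apply sat_inst.
  - intro H. apply (sat_inst Sigma s s). apply H.
Qed.
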